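(* Let $a,b$ be positive integers with $\gcd(a,b)=1$. For all $\pi\in\mathcal{D}_{b,-a}(a,b)$, $\widetilde\rho(\tilde f(\pi))=\rho_{\mathrm{AHJ}}(f(\pi))$.
   Context: Partitions are drawn in English convention in the first quadrant; a partition fitting in the $a\times b$ rectangle has as frontier a lattice path from $(0,0)$ to $(b,a)$ with unit north (N) and east (E) steps, its diagram being the unit squares above and to the left of the path. For a word $u$ with finitely many N's, $\mathrm{ptn}(u)$ is the partition whose parts are, for each N of $u$, the number of E's preceding it (zero parts discarded). The hook-length of a cell $c$ is the number of cells among $c$, the cells below it in its column and those to its right in its row. The $(b,-a)$-level of a lattice point $(x,y)$ is $by-ax$; a unit square $[x,x+1]\times[y,y+1]$ has the level of its southeast corner. Under the west-south convention, a step gets the level of its starting point. $\mathcal{D}_{b,-a}(a,b)$ is the set of partitions with at most $a$ parts, each at most $b$, whose frontier path visits only points of nonnegative level. For $\pi\in\mathcal{D}_{b,-a}(a,b)$ let $L(\pi)$ be the set of levels of unit squares lying above the line $by=ax$ and below the frontier path of $\pi$ (distinct positive integers). $f(\pi)$ is the unique partition whose first-column hook-lengths are exactly the elements of $L(\pi)$. Let $z=z_0z_1\cdots$ with $z_0=\mathrm{E}$ and, for $i>0$, $z_i=\mathrm{N}$ iff $i\in L(\pi)$ (else $\mathrm{E}$); $\tilde f(\pi)=\mathrm{ptn}(z)$. Let $y$ be the subword of $z$ of those $z_i$ ($i\ge0$) such that $i+a$ is the west-south level of some step of the frontier path of $\pi$; $\widetilde\rho(\tilde f(\pi))=\mathrm{ptn}(y)$.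 $\rho_{\mathrm{AHJ}}(f(\pi))$ is the partition having one row for each row of $\nu=f(\pi)$ whose first-column hook-length equals the level of a square lying directly east of a north step of the frontier path of $\pi$ (the square $[x,x+1]\times[y,y+1]$ for a north step from $(x,y)$ to $(x,y+1)$), that row having length equal to the number of cells in the corresponding row of $\nu$ with hook-length at most $b$. *)

From mathcomp Require Import all_boot all_order all_algebra.
Set Implicit Arguments.
Unset Strict Implicit.
Unset Printing Implicit Defensive.
Import GRing.Theory Num.Theory.

(* Words in N/E steps: [true] = N (north), [false] = E (east). *)

Definition is_partition (s : seq nat) : bool :=
  sorted geq s && all (fun p => 0 < p) s.

Definition mkptn (s : seq nat) : seq nat := sort geq [seq p <- s | 0 < p].

Definition ptn (u : seq bool) : seq nat :=
  mkptn [seq count negb (take k u) | k <- iota 0 (size u) & nth false u k].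

(* Frontier path of a partition pi fitting in the a x b box (English
   convention, first quadrant): the row at height y (0 <= y < a), i.e.
   [y, y+1], is row number a-1-y (0-based, from the top) of pi.
   rowlen_below y = length of the row at height y-1 (0 for y = 0). *)
Definition rowlen_below (a : nat) (pi : seq nat) (y : nat) : nat :=
  if y == 0 then 0 else nth 0 pi (a - y).

Definition frontier (a b : nat) (pi : seq nat) : seq bool :=
  flatten [seq rcons (nseq (rowlen_below a pi y.+1 - rowlen_below a pi y) false) true
          | y <- iota 0 a]
  ++ nseq (b - rowlen_below a pi a) false.

Fixpoint walk (p : nat * nat) (w : seq bool) : seq (nat * nat) :=
  match w with
  | [::] => [:: p]
  | s :: w' => p :: walk (if s then (p.1, p.2.+1) else (p.1.+1, p.2)) w'
  end.

Definition steps (w : seq bool) : seq ((nat * nat) * bool) :=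
  zip (walk (0, 0) w) w.

Definition level (a b x y : nat) : int := (Posz (b * y)) - (Posz (a * x)).

Definition inD (a b : nat) (pi : seq nat) : bool :=
  [&& is_partition pi, size pi <= a, all (fun p => p <= b) pi &
      all (fun q => (0 <= level a b q.1 q.2)%R) (walk (0, 0) (frontier a b pi))].

(* Unit square [x,x+1]x[y,y+1] (x < b, y < a) belongs to the diagram of pi. *)
Definition in_diagram (a : nat) (pi : seq nat) (x y : nat) : bool :=
  x < nth 0 pi (a - y.+1).

(* L(pi): levels (level of the SE corner (x+1,y)) of unit squares of the
   a x b rectangle lying (weakly) above the line b y = a x -- i.e. all of the
   square has nonnegative level, its minimum being at the SE corner -- and
   below the frontier path (i.e. not in the diagram). *)
Definition Lset (a b : nat) (pi : seq nat) : seq int :=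
  [seq level a b xy.1.+1 xy.2
  | xy <- [seq (x, y) | x <- iota 0 b, y <- iota 0 a]
  & (a * xy.1.+1 <= b * xy.2) && ~~ in_diagram a pi xy.1 xy.2].

Definition zword (a b : nat) (pi : seq nat) (i : nat) : bool :=
  if i == 0 then false else ((Posz i) \in Lset a b pi).

Definition step_levels (a b : nat) (pi : seq nat) : seq int :=
  [seq level a b st.1.1 st.1.2 | st <- steps (frontier a b pi)].

(* y: subword of z of the z_i with i + a a west-south step level.  All step
   levels are <= a*b (points have 0 <= y <= a, x >= 0), so only indices
   i < a*b+1 can qualify; the bound is harmless. *)
Definition yword (a b : nat) (pi : seq nat) : seq bool :=
  [seq zword a b pi i | i <- iota 0 (a * b).+1 & (Posz (i + a)) \in step_levels a b pi].

Definition rhotilde_ftilde (a b : nat) (pi : seq nat) : seq nat := ptn (yword a b pi).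

(* Hook length of the cell in row i, column j (0-based, English convention). *)
Definition hook (nu : seq nat) (i j : nat) : nat :=
  1 + (nth 0 nu i - j.+1)
    + count (fun r => j < nth 0 nu r) (iota i.+1 (size nu - i.+1)).

Definition first_col_hooks (nu : seq nat) : seq nat :=
  [seq hook nu i 0 | i <- iota 0 (size nu)].

(* Levels of the squares directly east of the north steps of the frontier:
   for a north step from (x,y), the square [x,x+1]x[y,y+1], whose level is
   that of its SE corner (x+1,y). *)
Definition east_of_N_levels (a b : nat) (pi : seq nat) : seq int :=
  [seq level a b st.1.1.+1 st.1.2 | st <- steps (frontier a b pi) & st.2].

Definition rhoAHJ (a b : nat) (pi nu : seq nat) : seq nat :=
  mkptn [seq count (fun j => hook nu i j <= b) (iota 0 (nth 0 nu i))
        | i <- iota 0 (size nu) & (Posz (hook nu i 0)) \in east_of_N_levels a b pi].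

From mathcomp Require Import all_boot all_order all_algebra zify.
Set Implicit Arguments.
Unset Strict Implicit.
Unset Printing Implicit Defensive.
Import GRing.Theory Num.Theory.

(* A part of ptn(y) counts the E's of y before one of its N's; a part of rho_AHJ(nu)
   counts the cells of hook length at most b in a row of nu.  In the row with
   first-column hook h, the numbers h - hook(r, j) are exactly the integers below h
   that are not first-column hooks, i.e. (by the hypothesis on nu) the e < h with
   z_e = E; so the row contributes #{e in [h - b, h) | z_e = E}.  The E's of y sit on
   east steps of the frontier, at most one per column, and by coprimality every E
   of z is obtained from exactly one E of y by adding a multiple of b; hence the
   window [h - b, h) holds one E of z for each E of y before h.  Finally, the N's
   of y are exactly the first-column hooks at levels east of north steps. *)

Definition ptn_parts (u : seq bool) : seq nat :=
  [seq count negb (take k u) | k <- iota 0 (size u) & nth false u k].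

Lemma ptnE u : ptn u = mkptn (ptn_parts u).
Proof. by []. Qed.

Lemma ptn_parts_rcons u s :
  ptn_parts (rcons u s) = if s then rcons (ptn_parts u) (count negb u) else ptn_parts u.
Proof.
rewrite /ptn_parts size_rcons -addn1 iotaD filter_cat map_cat /= add0n.
rewrite nth_rcons ltnn eqxx.
have -> : [seq count negb (take k (rcons u s)) | k <- iota 0 (size u) & nth false (rcons u s) k]
    = [seq count negb (take k u) | k <- iota 0 (size u) & nth false u k].
  rewrite (@eq_in_filter _ _ (nth false u)); last first.
    by move=> k; rewrite mem_iota add0n => /andP[_ k_lt]; rewrite nth_rcons k_lt.
  apply/eq_in_map => k; rewrite mem_filter mem_iota add0n => /andP[_ /andP[_ k_lt]].
  by rewrite -cats1 takel_cat // ltnW.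
by case: s; rewrite /= ?cats0 // -cats1 takel_cat // take_size cats1.
Qed.

Lemma ptn_parts_filter (P f : pred nat) n :
  ptn_parts [seq f i | i <- iota 0 n & P i] =
  [seq count (fun j => P j && ~~ f j) (iota 0 i) | i <- iota 0 n & P i && f i].
Proof.
elim: n => [//|n IH].
rewrite -addn1 iotaD !filter_cat !map_cat /= add0n.
case: (P n) => /=; last by rewrite !cats0.
rewrite cats1 ptn_parts_rcons IH; case: (f n); rewrite /= ?cats0 // cats1.
by rewrite count_map count_filter; congr rcons; apply: eq_count => j /=; rewrite andbC.
Qed.

Lemma perm_mkptn s t : perm_eq s t -> mkptn s = mkptn t.
Proof.
move=> perm_st; apply/perm_sortP; last exact: perm_filter.
- by move=> x y; apply: leq_total.
- by move=> x y z yx zy; apply: leq_trans zy yx.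
- by move=> x y /andP[yx xy]; apply/eqP; rewrite eqn_leq; apply/andP.
Qed.

Lemma count_iota_all (P : pred nat) m n :
  (forall i, m <= i < m + n -> P i) -> count P (iota m n) = n.
Proof.
move=> allP; rewrite (@eq_in_count _ _ predT) ?count_predT ?size_iota //.
by move=> i; rewrite mem_iota => /allP.
Qed.

Lemma count_iota_none (P : pred nat) m n :
  (forall i, m <= i < m + n -> ~~ P i) -> count P (iota m n) = 0.
Proof.
move=> noneP; rewrite (@eq_in_count _ _ pred0) ?count_pred0 //.
by move=> i; rewrite mem_iota => /noneP /negbTE.
Qed.

Lemma count_mem_iota (s : seq nat) n : uniq s ->
  count (mem s) (iota 0 n) = count (fun x => x < n) s.
Proof.
move=> uniq_s; rewrite -!size_filter; apply: perm_size; apply: uniq_perm.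
- exact: filter_uniq (iota_uniq 0 n).
- exact: filter_uniq.
- by move=> x; rewrite !mem_filter mem_iota add0n /= andbC.
Qed.

Lemma sorted_geq_nth (s : seq nat) i j :
  sorted geq s -> i <= j -> nth 0 s j <= nth 0 s i.
Proof.
move=> sorted_s i_le_j; have [j_lt|j_ge] := ltnP j (size s); last by rewrite nth_default.
apply: (sorted_leq_nth (leT := geq)) => //; rewrite ?inE //.
- by move=> x y z yx zy; apply: leq_trans zy yx.
- by move=> x /=.
- exact: leq_ltn_trans j_lt.
Qed.

Section RowHooks.
Variable nu : seq nat.
Hypothesis nu_ptn : is_partition nu.
Local Notation k := (size nu).
Local Notation n_ i := (nth 0 nu i).
Local Notation H := (first_col_hooks nu).

Lemma part_antimono i j : i <= j -> n_ j <= n_ i.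
Proof. by case/andP: nu_ptn => sorted_nu _; apply: sorted_geq_nth. Qed.

Lemma part_gt0 i : i < k -> 0 < n_ i.
Proof. by case/andP: nu_ptn => _ /all_nthP; apply. Qed.

Lemma hook_col0 i : i < k -> hook nu i 0 = n_ i + (k - i.+1).
Proof.
move=> i_lt_k; rewrite /hook count_iota_all; last by move=> s ?; apply: part_gt0; lia.
have := part_gt0 i_lt_k; lia.
Qed.

Lemma hook_col0_decr i j : i < j -> j < k -> hook nu j 0 < hook nu i 0.
Proof.
move=> i_lt_j j_lt_k; rewrite !hook_col0 //; last lia.
have := part_antimono (ltnW i_lt_j); lia.
Qed.

Lemma uniq_first_col_hooks : uniq H.
Proof.
rewrite map_inj_in_uniq ?iota_uniq // => i j; rewrite !mem_iota !add0n => /= i_lt j_lt e.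
case: (ltngtP i j) => // [i_lt_j|j_lt_i].
  by have := hook_col0_decr i_lt_j j_lt; rewrite e ltnn.
by have := hook_col0_decr j_lt_i i_lt; rewrite e ltnn.
Qed.

Lemma first_col_hook_gt0 e : e \in H -> 0 < e.
Proof. by case/mapP => s _ ->. Qed.

Variable r : nat.
Hypothesis r_lt_k : r < k.
Local Notation h := (hook nu r 0).

(* [hook_gap j] is [h - hook nu r j]: [j] cells fewer in the arm, and one fewer in the
   leg for each row below [r] that does not reach column [j]. *)
Definition hook_gap j := j + count (fun s => n_ s <= j) (iota r.+1 (k - r.+1)).

Lemma hook_add_gap j : j < n_ r -> hook nu r j + hook_gap j = h.
Proof.
move=> j_lt; rewrite /hook_gap hook_col0 // /hook.
have := count_predC (fun s => j < n_ s) (iota r.+1 (k - r.+1)).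
rewrite size_iota (@eq_count _ (predC _) (fun s => n_ s <= j)) => [|s]; last by rewrite /= -leqNgt.
lia.
Qed.

Lemma hook_gap_increasing j : hook_gap j < hook_gap j.+1.
Proof.
have : count (fun s => n_ s <= j) (iota r.+1 (k - r.+1))
    <= count (fun s => n_ s <= j.+1) (iota r.+1 (k - r.+1)).
  by apply: sub_count => s /= ?; lia.
rewrite /hook_gap; lia.
Qed.

Lemma hook_gap_notin j : j < n_ r -> hook_gap j \notin H.
Proof.
move=> j_lt; apply/mapP => -[s]; rewrite mem_iota add0n => /= s_lt_k.
rewrite hook_col0 // /hook_gap; set below := count _ _.
have [short|long] := leqP (n_ s) j.
  have r_lt_s : r < s by case: (ltnP r s) => // s_le_r; have := part_antimono s_le_r; lia.
  have : k - s <= below.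
    rewrite /below (_ : k - r.+1 = (s - r.+1) + (k - s)); last lia.
    rewrite iotaD count_cat (_ : r.+1 + (s - r.+1) = s); last lia.
    rewrite [count _ (iota s _)]count_iota_all; first lia.
    by move=> t ?; have := @part_antimono s t; lia.
  lia.
have : below <= k - s.+1.
  have [r_lt_s|s_le_r] := ltnP r s; last first.
    by apply: leq_trans (count_size _ _) _; rewrite size_iota; lia.
  rewrite /below (_ : k - r.+1 = (s - r) + (k - s.+1)); last lia.
  rewrite iotaD count_cat (_ : r.+1 + (s - r) = s.+1); last lia.
  rewrite count_iota_none ?add0n; last by move=> t ?; have := @part_antimono t s; lia.
  by apply: leq_trans (count_size _ _) _; rewrite size_iota.
lia.
Qed.

Lemma count_first_col_hooks_lt : count (fun e => e < h) H = k - r.+1.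
Proof.
rewrite count_map (_ : k = r.+1 + (k - r.+1)) ?iotaD ?count_cat; last lia.
rewrite add0n (_ : r.+1 + (k - r.+1) - r.+1 = k - r.+1); last lia.
rewrite count_iota_none ?add0n; last first.
  move=> s /andP[_ s_le_r] /=; rewrite -leqNgt.
  by case: (ltngtP s r) => [s_lt_r||->] //; [apply: ltnW; apply: hook_col0_decr | lia].
by rewrite count_iota_all // => s ?; apply: hook_col0_decr; lia.
Qed.

Lemma hook_gapsE :
  [seq hook_gap j | j <- iota 0 (n_ r)] = [seq e <- iota 0 h | e \notin H].
Proof.
set gaps := [seq hook_gap j | j <- _].
have sorted_gaps : sorted ltn gaps.
  apply: homo_sorted (iota_ltn_sorted 0 _).
  by apply: homo_ltn; [exact: ltn_trans | exact: hook_gap_increasing].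
have uniq_gaps : uniq gaps by apply: sorted_uniq sorted_gaps; [exact: ltn_trans | exact: ltnn].
have sub_gaps : {subset gaps <= [seq e <- iota 0 h | e \notin H]}.
  move=> e /mapP[j]; rewrite mem_iota add0n => /andP[_ j_lt] ->.
  rewrite mem_filter hook_gap_notin // mem_iota /=.
  have := hook_add_gap j_lt; rewrite /hook; lia.
have size_nonhooks : size [seq e <- iota 0 h | e \notin H] <= size gaps.
  rewrite size_map size_iota size_filter.
  have := count_predC (mem H) (iota 0 h).
  rewrite size_iota count_mem_iota ?uniq_first_col_hooks // count_first_col_hooks_lt.
  have -> : count (fun e => e \notin H) (iota 0 h) = count (predC (mem H)) (iota 0 h) by [].
  rewrite [in X in _ = X]hook_col0 //; lia.
have [_ perm_gaps] := uniq_min_size uniq_gaps sub_gaps size_nonhooks.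
apply: (irr_sorted_eq (leT := ltn)) => //; [exact: ltn_trans | exact: ltnn |].
by apply: sorted_filter; [exact: ltn_trans | exact: iota_ltn_sorted].
Qed.

Lemma count_row_hooks_le c :
  count (fun j => hook nu r j <= c) (iota 0 (n_ r)) =
  count (fun e => (h - c <= e) && (e \notin H)) (iota 0 h).
Proof.
rewrite -count_filter -hook_gapsE count_map.
apply: eq_in_count => j; rewrite mem_iota add0n => /= j_lt.
have := hook_add_gap j_lt; rewrite /hook_gap => gapE.
by apply/idP/idP; lia.
Qed.

End RowHooks.

Section ModReach.
Variables (b : nat) (E : pred nat).
Hypothesis b_gt0 : 0 < b.

Definition mod_reach (e : nat) : bool :=
  has (fun x => E x && (x == e %[mod b])) (iota 0 e.+1).

Lemma mod_reachE e : mod_reach e = E e || (b <= e) && mod_reach (e - b).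
Proof.
apply/idP/idP => [/hasP[x]|].
  rewrite mem_iota ltnS => /= x_le_e /andP[Ex].
  have [<- _|x_ne_e] := eqVneq x e; first by rewrite Ex.
  have x_lt_e : x < e by rewrite ltn_neqAle x_ne_e.
  rewrite eq_sym eqn_mod_dvd ?(ltnW x_lt_e) // => b_dvd.
  have b_le : b <= e - x by apply: dvdn_leq; rewrite ?subn_gt0.
  apply/orP; right; apply/andP; split; first lia.
  apply/hasP; exists x; first by rewrite mem_iota; lia.
  rewrite Ex /= eq_sym eqn_mod_dvd; last lia.
  by rewrite (_ : e - b - x = e - x - b) ?(dvdn_sub b_dvd (dvdnn b)); lia.
case/orP => [Ee|/andP[b_le_e /hasP[x]]].
  by apply/hasP; exists e; rewrite ?mem_iota ?Ee ?eqxx //; lia.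
rewrite mem_iota => x_le /andP[Ex /eqP x_mod]; apply/hasP; exists x.
  by rewrite mem_iota; lia.
by rewrite Ex x_mod /= -(modnDr (e - b) b) subnK.
Qed.

Lemma count_window_succ (N : pred nat) h :
  count (fun e => (h - b <= e) && N e) (iota 0 h) =
  count (fun e => (h.+1 - b <= e) && N e) (iota 0 h) + (b <= h) && N (h - b).
Proof.
have [b_le_h|h_lt_b] := leqP b h; last first.
  rewrite addn0; apply: eq_count => e.
  have -> : h - b = 0 by lia.
  by have -> : h.+1 - b = 0 by lia.
have [m ->] : exists m, h = m + b by exists (h - b); lia.
rewrite addnK (_ : (m + b).+1 - b = m.+1); last lia.
rewrite iotaD add0n -(prednK b_gt0) /= !count_cat /= leqnn ltnn /=.
have below (c : nat) : m <= c -> count (fun e => (c <= e) && N e) (iota 0 m) = 0.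
  move=> m_le_c; apply/eqP; rewrite -leqn0 leqNgt -has_count; apply/hasPn => e.
  by rewrite mem_iota => ?; apply/negP => /andP[? _]; lia.
rewrite !below //; congr (_ + _); rewrite addnC; congr (_ + _).
by apply: eq_in_count => e; rewrite mem_iota => /andP[m_lt_e _]; rewrite m_lt_e ltnW.
Qed.

Hypothesis E_inj_mod : forall x y, E x -> E y -> x = y %[mod b] -> x = y.

Lemma mod_reach_sub e : E e -> (b <= e) && mod_reach (e - b) = false.
Proof.
move=> Ee; apply/negP => /andP[b_le_e /hasP[x]]; rewrite mem_iota => x_le /andP[Ex /eqP].
rewrite -(modnDr (e - b) b) subnK // => /(E_inj_mod Ex Ee); lia.
Qed.

Lemma count_mod_reach_window h :
  count (fun e => (h - b <= e) && mod_reach e) (iota 0 h) = count E (iota 0 h).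
Proof.
elim: h => [//|h IH].
rewrite -addn1 iotaD !count_cat /= !add0n !addn0 addn1.
have -> : h.+1 - b <= h by lia.
rewrite -IH count_window_succ [mod_reach h]mod_reachE.
case Eh: (E h); last by rewrite addn0.
by rewrite mod_reach_sub // addn0.
Qed.

End ModReach.

Definition step_end (p : nat * nat) (s : bool) : nat * nat :=
  if s then (p.1, p.2.+1) else (p.1.+1, p.2).

Fixpoint steps_from (p : nat * nat) (w : seq bool) : seq ((nat * nat) * bool) :=
  if w is s :: w' then (p, s) :: steps_from (step_end p s) w' else [::].

Lemma stepsE w : steps w = steps_from (0, 0) w.
Proof. by rewrite /steps; elim: w (0, 0) => [|s w IH] p //=; rewrite IH. Qed.

Lemma steps_from_cat p u v :
  steps_from p (u ++ v) = steps_from p u ++ steps_from (foldl step_end p u) v.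
Proof. by elim: u p => [|s u IH] p //=; rewrite IH. Qed.

Lemma step_end_in_walk p w st :
  st \in steps_from p w -> step_end st.1 st.2 \in walk p w.
Proof.
elim: w p => [|s w IH] p //=; rewrite !inE => /orP[/eqP -> | /IH ->]; last by rewrite orbT.
by case: w {IH} => [|? ?]; rewrite /= inE eqxx orbT.
Qed.

Lemma steps_from_nseqE p n x y d :
  (((x, y), d) \in steps_from p (nseq n false)) = [&& ~~ d, y == p.2 & p.1 <= x < p.1 + n].
Proof.
elim: n p => [|n IH] [p1 p2] /=; first by rewrite addn0 in_nil; apply/esym/negP; lia.
rewrite inE IH /= addnS !xpair_eqE {IH}.
case: d => /=; first by rewrite !andbF.
rewrite eqxx andbT; case: (y == p2); rewrite /= ?andbF //.
by case: (x =P p1) => [->|/eqP x_ne]; apply/idP/idP; lia.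
Qed.

Lemma foldl_step_end_nseq p n : foldl step_end p (nseq n false) = (p.1 + n, p.2).
Proof. by elim: n p => [|n IH] [p1 p2] /=; rewrite ?addn0 // IH /= addnS. Qed.

Section Frontier.
Variables (a b : nat) (pi : seq nat).
Hypothesis pi_D : inD a b pi.

Local Notation rb := (rowlen_below a pi).

Definition rowlen y := nth 0 pi (a - y.+1).

Lemma rowlen_belowS y : rb y.+1 = rowlen y.
Proof. by []. Qed.

Lemma part_le_b i : nth 0 pi i <= b.
Proof.
case/and4P: pi_D => _ _ /allP le_b _; have [i_lt|i_ge] := ltnP i (size pi).
  by apply: le_b; apply: mem_nth.
by rewrite nth_default.
Qed.

Lemma rowlen_below_le_b y : rb y <= b.
Proof. by rewrite /rowlen_below; case: eqP => // _; apply: part_le_b. Qed.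

Lemma rowlen_below_mono y y' : y <= y' -> rb y <= rb y'.
Proof.
move=> y_le; rewrite /rowlen_below; case: eqP => // /eqP y_ne0.
case: eqP => [y'0|_]; first lia.
by case/and4P: pi_D => /andP[sorted_pi _] _ _ _; apply: sorted_geq_nth; lia.
Qed.

Lemma rowlen_mono y y' : y <= y' -> rowlen y <= rowlen y'.
Proof. by move=> y_le; rewrite -!rowlen_belowS; apply: rowlen_below_mono. Qed.

Lemma walk_frontier_ge0 x y : (x, y) \in walk (0, 0) (frontier a b pi) -> a * x <= b * y.
Proof. by case/and4P: pi_D => _ _ _ /allP ge0 /ge0; rewrite /level subr_ge0 lez_nat. Qed.

Definition row_word y := rcons (nseq (rb y.+1 - rb y) false) true.

Definition row_step y (st : (nat * nat) * bool) :=
  let: ((x, y'), d) := st in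
  (y' == y) && (if d then x == rowlen y else rb y <= x < rowlen y).

Lemma foldl_row_word y : foldl step_end (rb y, y) (row_word y) = (rb y.+1, y.+1).
Proof.
by rewrite /row_word -cats1 foldl_cat foldl_step_end_nseq /= subnKC // rowlen_below_mono.
Qed.

Lemma mem_row_word y st : (st \in steps_from (rb y, y) (row_word y)) = row_step y st.
Proof.
case: st => [[x y'] d].
rewrite /row_word -cats1 steps_from_cat foldl_step_end_nseq mem_cat steps_from_nseqE /= inE.
rewrite subnKC ?rowlen_below_mono //.
by case: d => /=; rewrite !xpair_eqE rowlen_belowS ?andbT ?andbF ?orbF // andbC.
Qed.

Local Notation rows n := (flatten [seq row_word y | y <- iota 0 n]).

Lemma foldl_rows n : foldl step_end (0, 0) (rows n) = (rb n, n).
Proof.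
elim: n => [//|n IH].
by rewrite -addn1 iotaD map_cat flatten_cat foldl_cat IH /= cats0 foldl_row_word addn1.
Qed.

Lemma mem_rows n st : (st \in steps_from (0, 0) (rows n)) = has (row_step ^~ st) (iota 0 n).
Proof.
elim: n => [//|n IH].
rewrite -addn1 iotaD map_cat flatten_cat steps_from_cat mem_cat IH foldl_rows has_cat /=.
by rewrite cats0 mem_row_word orbF.
Qed.

Definition frontier_step (st : (nat * nat) * bool) :=
  let: ((x, y), d) := st in
  if d then (y < a) && (x == rowlen y)
  else (y < a) && (rb y <= x < rowlen y) || (y == a) && (rb a <= x < b).

Lemma mem_steps_frontier st : (st \in steps (frontier a b pi)) = frontier_step st.
Proof.
rewrite stepsE /frontier steps_from_cat mem_cat mem_rows foldl_rows.
case: st => [[x y] d]; rewrite steps_from_nseqE /= subnKC ?rowlen_below_le_b //.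
apply/idP/idP.
- case/orP => [/hasP[y0] | /and3P[/negbTE -> /eqP -> ->]]; last by rewrite eqxx orbT.
  rewrite mem_iota => y0_in /= /andP[/eqP -> step].
  have y0_lt : y0 < a by lia.
  by case: d step => ->; rewrite y0_lt.
- case: d => [/andP[y_lt /eqP ->] | /orP[/andP[y_lt step] | /andP[/eqP -> step]]].
  + by apply/orP; left; apply/hasP; exists y; rewrite ?mem_iota ?eqxx //=; lia.
  + by apply/orP; left; apply/hasP; exists y; rewrite ?mem_iota ?eqxx //=; lia.
  + by rewrite step eqxx orbT.
Qed.

Lemma frontier_step_end_ge0 x y d :
  frontier_step ((x, y), d) -> a * (step_end (x, y) d).1 <= b * (step_end (x, y) d).2.
Proof.
rewrite -mem_steps_frontier stepsE => /step_end_in_walk /=.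
by case: (step_end (x, y) d) => x' y'; apply: walk_frontier_ge0.
Qed.

End Frontier.

Lemma eq_levelE a b h x y : (Posz h == level a b x y) = (h + a * x == b * y).
Proof. by rewrite /level eq_sym subr_eq -PoszD eqz_nat eq_sym. Qed.

Section Coprime.
Variables (a b : nat).
Hypotheses (b_gt0 : 0 < b) (coprime_ab : coprime a b).

Lemma level_inj X X' Y Y' : 0 < X <= b -> 0 < X' <= b ->
  b * Y + a * X' = b * Y' + a * X -> X = X' /\ Y = Y'.
Proof.
wlog X_le : X X' Y Y' / X <= X'.
  move=> wlog_le X_in X'_in E; have [le|lt] := leqP X X'; first exact: wlog_le.
  by have [] := wlog_le X' X Y' Y (ltnW lt) X'_in X_in (esym E).
move=> X_in X'_in E.
have E2 : a * (X' - X) = b * (Y' - Y).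
  have : a * X <= a * X' by rewrite leq_mul2l X_le orbT.
  rewrite !mulnBr; lia.
have b_dvd : b %| X' - X by rewrite -(Gauss_dvdr _ (_ : coprime b a)) ?E2 ?dvdn_mulr // coprime_sym.
have XX' : X = X'.
  have [d0|d_gt0] := posnP (X' - X); first lia.
  by have := dvdn_leq d_gt0 b_dvd; lia.
subst X'; split => //; apply/eqP; rewrite -(eqn_pmul2l b_gt0); apply/eqP; lia.
Qed.

Lemma level_column j : exists X Y, 0 < X <= b /\ j + a * X = b * Y.
Proof.
have [u _ bezout] := Bezoutl a b_gt0; move: bezout; rewrite gcdnC (eqP coprime_ab) => bezout.
pose X0 := (j * u) %% b; pose X := if X0 == 0 then b else X0.
have X_mod : X %% b = X0 by rewrite /X; case: eqP => [->|_]; rewrite ?modnn ?modn_mod.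
have b_dvd : b %| j + a * X.
  rewrite /dvdn -modnDmr -modnMmr X_mod /X0 modnMmr modnDmr.
  rewrite (_ : j + a * (j * u) = j * (1 + u * a)); first exact: dvdn_mull.
  by rewrite mulnDr muln1 mulnA (mulnC a j) -mulnA (mulnC a u).
exists X, ((j + a * X) %/ b); split; last by rewrite [b * _]mulnC divnK.
rewrite /X; case: eqP => [_|/eqP]; first by rewrite b_gt0 leqnn.
by rewrite lt0n => ->; rewrite ltnW // ltn_pmod.
Qed.

End Coprime.

Section LevelSets.
Variables (a b : nat) (pi : seq nat).
Hypotheses (a_gt0 : 0 < a) (b_gt0 : 0 < b) (coprime_ab : coprime a b) (pi_D : inD a b pi).

Local Notation L := (Lset a b pi).
Local Notation zw := (zword a b pi).
Local Notation step := (frontier_step a b pi).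
Local Notation rl := (rowlen a pi).
Local Notation rb := (rowlen_below a pi).

Lemma step_levelsP s : reflect (exists x y d, step ((x, y), d) /\ s + a * x = b * y)
  (Posz s \in step_levels a b pi).
Proof.
apply: (iffP mapP) => [[[[x y] d] st /eqP]|[x [y [d [st E]]]]].
  by rewrite eq_levelE => /eqP E; exists x, y, d; rewrite -mem_steps_frontier.
by exists ((x, y), d); rewrite ?(mem_steps_frontier pi_D) //; apply/eqP; rewrite eq_levelE E.
Qed.

Lemma LsetP h : reflect (exists x y, [/\ x < b, y < a, a * x.+1 <= b * y, rl y <= x
   & h + a * x.+1 = b * y]) (Posz h \in L).
Proof.
apply: (iffP mapP) => [[[x y]]|[x [y [x_lt y_lt above out E]]]].
  rewrite mem_filter => /andP[/= /andP[above out] /allpairsP[[x' y'] [/= x_in y_in [ex ey]]]].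
  subst x' y'; move/eqP; rewrite eq_levelE => /eqP E; rewrite !mem_iota /= in x_in y_in.
  by exists x, y; split => //; rewrite /in_diagram -leqNgt in out.
exists (x, y); last by apply/eqP; rewrite eq_levelE E.
rewrite mem_filter /= above /in_diagram -leqNgt out /=.
by apply/allpairsP; exists (x, y); rewrite !mem_iota.
Qed.

Lemma east_of_N_levelsP h : reflect (exists x y, step ((x, y), true) /\ h + a * x.+1 = b * y)
  (Posz h \in east_of_N_levels a b pi).
Proof.
apply: (iffP mapP) => [[[[x y] d]]|[x [y [st E]]]].
  rewrite mem_filter (mem_steps_frontier pi_D) => /andP[/= d_true st].
  move/eqP; rewrite eq_levelE => /eqP E.
  by move: d_true st; case: d => // _ st; exists x, y.
exists ((x, y), true); rewrite ?mem_filter ?(mem_steps_frontier pi_D) //.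
by apply/eqP; rewrite eq_levelE E.
Qed.

Lemma zwordE j : zw j = (j != 0) && (Posz j \in L).
Proof. by rewrite /zword; case: eqP. Qed.

Lemma frontier_step_y_le x y d : step ((x, y), d) -> y <= a.
Proof. by case: d => /=; [case/andP => ? _ | case/orP => /andP[? _]]; lia. Qed.

Lemma east_step_x_lt x y : step ((x, y), false) -> x < b.
Proof.
case/orP => /andP[_ /andP[_ x_lt]] //.
exact: leq_trans x_lt (part_le_b pi_D _).
Qed.

(* The square north of an east step lies in the diagram. *)
Lemma east_step_zwordF x y j : step ((x, y), false) -> j + a * x.+1 = b * y -> ~~ zw j.
Proof.
move=> st E; rewrite zwordE; apply/negP => /andP[_ /LsetP[x' [y' [x'_lt y'_lt _ out E']]]].
have [[x_eq] y_eq] : x.+1 = x'.+1 /\ y = y'.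
  by apply: (level_inj b_gt0 coprime_ab); rewrite ?(east_step_x_lt st); lia.
subst x' y'.
by move: st out => /orP[/andP[_ /andP[_ x_lt]] | /andP[/eqP y_eq _]]; lia.
Qed.

(* The square east of a north step is above the line and outside the diagram. *)
Lemma north_step_zword x y j : step ((x, y), true) -> j + a * x.+1 = b * y -> zw j.
Proof.
move=> /andP[y_lt /eqP x_eq] E.
have x_le : x <= b by rewrite x_eq (part_le_b pi_D).
have x_lt : x < b.
  rewrite ltn_neqAle x_le andbT; apply/eqP => x_b; subst x.
  have : b * y <= b * a.-1 by rewrite leq_mul2l; lia.
  have : b * a.-1 + b = a * b by rewrite -mulnSr prednK // mulnC.
  by rewrite mulnS in E; lia.
rewrite zwordE; apply/andP; split.
  apply/eqP => j0; subst j.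
  by have [] := level_inj b_gt0 coprime_ab (X := x.+1) (X' := b) (Y := y) (Y' := a); lia.
by apply/LsetP; exists x, y; rewrite x_eq; split; lia.
Qed.

(* [y_east j]: the letter z_j is an E that is kept in y. *)
Definition y_east j := (Posz (j + a) \in step_levels a b pi) && ~~ zw j.

Lemma y_eastP j :
  reflect (exists x y, step ((x, y), false) /\ j + a * x.+1 = b * y) (y_east j).
Proof.
apply: (iffP andP) => [[/step_levelsP[x [y [d [st E]]]] not_zw]|[x [y [st E]]]].
  case: d st => st; last by exists x, y; rewrite mulnS; split => //; lia.
  by move/negP: not_zw; case; apply: (north_step_zword st); rewrite mulnS; lia.
split; last exact: east_step_zwordF st E.
by apply/step_levelsP; exists x, y, false; rewrite mulnS in E; split => //; lia.
Qed.

Lemma east_steps_same_column x y y' :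
  step ((x, y), false) -> step ((x, y'), false) -> y = y'.
Proof.
wlog y_le : y y' / y <= y'.
  by move=> wlog_le st st'; case: (leqP y y') => [|/ltnW] le; [|apply/esym]; apply: wlog_le.
move=> st st'; apply/eqP; rewrite eqn_leq y_le leqNgt /=; apply/negP => y_lt.
have rl_le : rl y <= rb y'.
  by rewrite -(prednK (leq_ltn_trans (leq0n y) y_lt)) rowlen_belowS (rowlen_mono pi_D); lia.
have y'_le := frontier_step_y_le st'.
move: st st' => /orP[/andP[_ /andP[_ x_lt]] | /andP[/eqP y_a _]]; last lia.
by move=> /orP[/andP[_ /andP[rb_le _]] | /andP[/eqP y'_a /andP[rb_le _]]]; [|subst y']; lia.
Qed.

Lemma y_east_inj_mod x x' : y_east x -> y_east x' -> x = x' %[mod b] -> x = x'.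
Proof.
wlog x_le : x x' / x <= x'.
  move=> wlog_le ex ex' E; case: (leqP x x') => [le|/ltnW le]; first exact: wlog_le.
  exact/esym/wlog_le.
move=> /y_eastP[X [Y [st E]]] /y_eastP[X' [Y' [st' E']]] /eqP.
rewrite eq_sym eqn_mod_dvd // => /divnK; move: ((x' - x) %/ b) => t Et.
have [[X_eq] Y_eq] : X.+1 = X'.+1 /\ Y + t = Y'.
  apply: (level_inj b_gt0 coprime_ab); rewrite ?(east_step_x_lt st) ?(east_step_x_lt st') //.
  by rewrite mulnDr (mulnC b t); lia.
subst X'; have := east_steps_same_column st st'; lia.
Qed.

Lemma lowest_east_step x : x < b ->
  exists y0, step ((x, y0), false) /\ forall y, y < y0 -> rl y <= x.
Proof.
move=> x_lt; pose y0 := find (fun y => x < rl y) (iota 0 a).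
have y0_le : y0 <= a by rewrite -[a](size_iota 0) find_size.
have below y : y < y0 -> rl y <= x.
  move=> y_lt; have := before_find 0 y_lt.
  by rewrite nth_iota ?add0n => [/negbT|]; [rewrite -leqNgt | lia].
exists y0; split => //=.
have [y0_lt|y0_a] := ltnP y0 a.
  have has_y0 : has (fun y => x < rl y) (iota 0 a) by rewrite has_find size_iota.
  have := nth_find 0 has_y0; rewrite -/y0 nth_iota // add0n => x_lt_rl.
  rewrite x_lt_rl andbT /=; apply/orP; left; clearbody y0.
  by case: y0 below {y0_le y0_lt x_lt_rl} => [|y] below //; rewrite rowlen_belowS below.
have y0a : y0 = a by lia.
have -> : rb a = rl a.-1 by rewrite -rowlen_belowS prednK.
by rewrite y0a eqxx x_lt andbT /= below //; lia.
Qed.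

Lemma mod_reach_zwordF j : mod_reach b y_east j -> ~~ zw j.
Proof.
case/hasP => x; rewrite mem_iota ltnS => x_le /andP[/y_eastP[x0 [y0 [st E]]]].
rewrite eq_sym eqn_mod_dvd // => /divnK; move: ((j - x) %/ b) => t Et.
rewrite zwordE; apply/negP => /andP[_ /LsetP[x' [y' [x'_lt y'_lt _ out E']]]].
have [[x0_eq] y'_eq] : x0.+1 = x'.+1 /\ y0 + t = y'.
  by apply: (level_inj b_gt0 coprime_ab); rewrite ?(east_step_x_lt st); lia.
subst x' y'.
move: st => /orP[/andP[y0_lt /andP[_ x0_lt]] | /andP[/eqP y0_a _]]; last lia.
by have := rowlen_mono pi_D (leq_addr t y0); lia.
Qed.

(* Take the point (X, Y) of the strip at level j and the lowest east step in column X - 1: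
   if it is not above row Y it provides the E of y, otherwise the square (X - 1, Y)
   lies in L. *)
Lemma zwordF_mod_reach j : ~~ zw j -> mod_reach b y_east j.
Proof.
move=> not_zw; have [X [Y [/andP[X_gt0 X_le] E]]] := level_column b_gt0 coprime_ab j.
have x_lt : X.-1 < b by lia.
have [y0 [st below]] := lowest_east_step x_lt.
have := frontier_step_end_ge0 pi_D st; rewrite /= prednK // => end_ge0.
have [y0_le|Y_lt] := leqP y0 Y.
  have le : b * y0 <= b * Y by rewrite leq_mul2l y0_le orbT.
  apply/hasP; exists (b * y0 - a * X); first by rewrite mem_iota; lia.
  apply/andP; split.
    by apply/y_eastP; exists X.-1, y0; rewrite prednK //; split => //; lia.
  rewrite eq_sym eqn_mod_dvd; last lia.
  by rewrite (_ : j - (b * y0 - a * X) = b * (Y - y0)) ?dvdn_mulr // mulnBr; lia.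
have Y_lt_a : Y < a by have := frontier_step_y_le st; lia.
move/negP: not_zw; case; rewrite zwordE; apply/andP; split.
  apply/eqP => j0; subst j.
  by have [] := level_inj b_gt0 coprime_ab (X := X) (X' := b) (Y := Y) (Y' := a); lia.
by apply/LsetP; exists X.-1, Y; rewrite prednK //; split; try lia; apply: below.
Qed.

Lemma zwordN_mod_reach j : ~~ zw j = mod_reach b y_east j.
Proof. by apply/idP/idP; [apply: zwordF_mod_reach | apply: mod_reach_zwordF]. Qed.

Lemma mem_Lset_east_of_N h :
  (Posz h \in L) && (Posz h \in east_of_N_levels a b pi) =
  (h < (a * b).+1) && ((Posz (h + a) \in step_levels a b pi) && zw h).
Proof.
apply/idP/idP.
  case/andP => /LsetP[x [y [_ y_lt _ _ E]]] /east_of_N_levelsP[x' [y' [st E']]].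
  apply/and3P; split.
  - have : b * y <= b * a.-1 by rewrite leq_mul2l; lia.
    have : b * a.-1 + b = a * b by rewrite -mulnSr prednK // mulnC.
    lia.
  - by apply/step_levelsP; exists x', y', true; rewrite mulnS in E'; split => //; lia.
  - exact: north_step_zword st E'.
case/and3P => _ /step_levelsP[x [y [d [st E]]]] zw_h.
have := zw_h; rewrite zwordE => /andP[_ ->] /=.
case: d st => st; first by apply/east_of_N_levelsP; exists x, y; rewrite mulnS; split => //; lia.
have E' : h + a * x.+1 = b * y by rewrite mulnS; lia.
by have := east_step_zwordF st E'; rewrite zw_h.
Qed.

End LevelSets.

Lemma rhotilde_ftildeE a b pi :
  rhotilde_ftilde a b pi =
  mkptn [seq count (y_east a b pi) (iota 0 i)
        | i <- iota 0 (a * b).+1 & (Posz (i + a) \in step_levels a b pi) && zword a b pi i].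
Proof. by rewrite /rhotilde_ftilde ptnE /yword ptn_parts_filter. Qed.

Section HooksAreLevels.
Variables (a b : nat) (pi nu : seq nat).
Hypotheses (a_gt0 : 0 < a) (b_gt0 : 0 < b) (coprime_ab : coprime a b) (pi_D : inD a b pi).
Hypotheses (nu_ptn : is_partition nu)
  (hooksE : forall h, (h \in first_col_hooks nu) = (Posz h \in Lset a b pi)).

Lemma notin_first_col_hooksE e : (e \notin first_col_hooks nu) = ~~ zword a b pi e.
Proof.
rewrite zwordE hooksE; case: eqP => [->|_] //=.
by rewrite -hooksE; apply/negP => /first_col_hook_gt0.
Qed.

Lemma count_row_hooks_le_b r : r < size nu ->
  count (fun j => hook nu r j <= b) (iota 0 (nth 0 nu r)) =
  count (y_east a b pi) (iota 0 (hook nu r 0)).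
Proof.
move=> r_lt; rewrite count_row_hooks_le //.
rewrite -(count_mod_reach_window b_gt0 (y_east_inj_mod a_gt0 b_gt0 coprime_ab pi_D)).
apply: eq_count => e /=.
by rewrite notin_first_col_hooksE (zwordN_mod_reach a_gt0 b_gt0 coprime_ab pi_D).
Qed.

Lemma rhoAHJE :
  rhoAHJ a b pi nu =
  mkptn [seq count (y_east a b pi) (iota 0 h)
        | h <- [seq hook nu r 0 | r <- iota 0 (size nu)
                & Posz (hook nu r 0) \in east_of_N_levels a b pi]].
Proof.
rewrite /rhoAHJ -map_comp; congr mkptn; apply/eq_in_map => r.
by rewrite mem_filter mem_iota => /andP[_ /andP[_ r_lt]]; apply: count_row_hooks_le_b.
Qed.

Lemma perm_north_indices :
  perm_eq [seq i <- iota 0 (a * b).+1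
          | (Posz (i + a) \in step_levels a b pi) && zword a b pi i]
          [seq hook nu r 0 | r <- iota 0 (size nu)
          & Posz (hook nu r 0) \in east_of_N_levels a b pi].
Proof.
apply: uniq_perm; first exact: filter_uniq (iota_uniq _ _).
  exact: subseq_uniq (map_subseq _ (filter_subseq _ _)) (uniq_first_col_hooks nu_ptn).
move=> h; rewrite mem_filter mem_iota add0n leq0n /= andbC.
rewrite -(mem_Lset_east_of_N a_gt0 b_gt0 coprime_ab pi_D) -hooksE.
apply/andP/mapP => [[/mapP[r r_in ->] EN_r]|[r]]; first by exists r; rewrite // mem_filter EN_r.
by rewrite mem_filter => /andP[EN_r r_in] ->; split => //; apply: map_f.
Qed.

End HooksAreLevels.

Theorem mainTheorem8 (a b : nat) :
  0 < a -> 0 < b -> coprime a b ->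
  forall pi : seq nat, inD a b pi ->
  forall nu : seq nat, is_partition nu ->
  (forall h : nat, (h \in first_col_hooks nu) = ((Posz h) \in Lset a b pi)) ->
  rhotilde_ftilde a b pi = rhoAHJ a b pi nu.
Proof.
move=> a_gt0 b_gt0 coprime_ab pi pi_D nu nu_ptn hooksE.
rewrite rhotilde_ftildeE (rhoAHJE a_gt0 b_gt0 coprime_ab pi_D nu_ptn hooksE).
by apply/perm_mkptn/perm_map/perm_north_indices.
Qed.
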